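(* Let $G$ be a graph on $n$ vertices ($n$ even and sufficiently large) in which every vertex has at least $n-\sqrt{n}/4000$ neighbors, and let a perfect matching of $G$ be chosen uniformly at random. Then for every vertex $v$, there are at most $\sqrt{n}/9$ vertices $u$ such that the probability that $(u,v)$ is contained in the matching is less than $\frac{99}{100n}$. *)

From HB Require Import structures.
From mathcomp Require Import all_boot all_order all_algebra all_field.
Set Implicit Arguments. Unset Strict Implicit. Unset Printing Implicit Defensive.
Import Order.TTheory GRing.Theory Num.Theory.

Definition simple_graph (V : finType) (adj : rel V) : Prop :=
  symmetric adj /\ irreflexive adj.

Definition degree (V : finType) (adj : rel V) (v : V) : nat :=
  #|[set u | adj v u]|.

Definition is_edge (V : finType) (adj : rel V) (e : {set V}) : bool :=
  [exists x, exists y, adj x y && (e == [set x; y])].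

Definition perfect_matching (V : finType) (adj : rel V) (M : {set {set V}}) : bool :=
  [forall e in M, is_edge adj e] && [forall x, #|[set e in M | x \in e]| == 1%N].

Definition perfect_matchings (V : finType) (adj : rel V) : {set {set {set V}}} :=
  [set M | perfect_matching adj M].

Definition pm_prob (V : finType) (adj : rel V) (u v : V) : algC :=
  (#|[set M in perfect_matchings adj | [set u; v] \in M]|%:R /
   #|perfect_matchings adj|%:R)%R.

From HB Require Import structures.
From mathcomp Require Import all_boot all_order all_algebra all_field.
From mathcomp Require Import zify.
Import Order.TTheory GRing.Theory Num.Theory.
Set Implicit Arguments. Unset Strict Implicit. Unset Printing Implicit Defensive.

(* Encode perfect matchings as fixed-point-free involutions q along edges, let
   T be their number, N_u the number with q v = u, and K the largest number of
   non-neighbours of a vertex.  If v ~ u and q v <> u, either q u is a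
   non-neighbour of q v ("q blocks u"), or trading the edges {v, q v}, {u, q u}
   for {v, u}, {q v, q u} gives an involution pairing v with u, from which q is
   recovered knowing q v; hence T <= n N_u + B_u, where B_u counts the
   involutions blocking u.  Each involution blocks at most K vertices, so
   sum_u B_u <= K T.  A neighbour u with n N_u < (1 - 1/m) T has B_u > T / m, so
   there are at most m K of them, and at most (m + 1) K such u in all; with
   m = 100 and K <= sqrt n / 4000 this is below sqrt n / 9.  Finally T > 0 when
   3 K < n, by a greedy construction that uses augmenting paths of length 3. *)

Lemma set2_eq (V : finType) (a b c d : V) :
  [set a; b] = [set c; d] -> c != d -> (a = c /\ b = d) \/ (a = d /\ b = c).
Proof.
move=> E ncd.
have ha : a \in [set c; d] by rewrite -E !inE eqxx.
have hb : b \in [set c; d] by rewrite -E !inE eqxx orbT.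
have hc : c \in [set a; b] by rewrite E !inE eqxx.
have hd : d \in [set a; b] by rewrite E !inE eqxx orbT.
move: ha hb hc hd; rewrite !inE.
case/orP=> /eqP ea; subst a.
- move=> _ _ /orP[/eqP edc|/eqP edb]; first by rewrite edc eqxx in ncd.
  by left.
- move=> _ /orP[/eqP ecd|/eqP ecb] _; first by rewrite ecd eqxx in ncd.
  by right.
Qed.

Definition non_neighbours (V : finType) (adj : rel V) (w : V) : {set V} :=
  [set y | ~~ adj w y].

Section MatchingInvolutions.

Variables (V : finType) (adj : rel V).
Hypotheses (adj_sym : symmetric adj) (adj_irr : irreflexive adj).

Definition matching_involutions : {set {ffun V -> V}} :=
  [set q : {ffun V -> V} | [forall x, (q (q x) == x) && adj x (q x)]].

Definition matching_of (q : {ffun V -> V}) : {set {set V}} :=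
  [set [set x; q x] | x : V].

Definition partner (M : {set {set V}}) : {ffun V -> V} :=
  [ffun x => odflt x [pick y | [set x; y] \in M]].

Lemma matching_involutionsP (q : {ffun V -> V}) :
  reflect (forall x, q (q x) = x /\ adj x (q x)) (q \in matching_involutions).
Proof.
rewrite inE; apply: (iffP forallP) => H x.
  by case/andP: (H x) => /eqP.
by case: (H x) => -> ->; rewrite eqxx.
Qed.

Lemma mem_matching_of (q : {ffun V -> V}) a b :
  q \in matching_involutions -> ([set a; b] \in matching_of q) = (q a == b).
Proof.
move=> /matching_involutionsP H; apply/imsetP/eqP; last by move=> <-; exists a.
case=> y _ E.
have nyq : y != q y by apply/eqP=> e; have := (H y).2; rewrite -e adj_irr.
by case: (set2_eq E nyq) => [[-> ->] | [-> ->]]; rewrite ?(H y).1.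
Qed.

Lemma matching_of_inj : {in matching_involutions &, injective matching_of}.
Proof.
move=> p q hp hq E; apply/ffunP=> x.
have : [set x; p x] \in matching_of q by rewrite -E; apply/imsetP; exists x.
by rewrite mem_matching_of // => /eqP.
Qed.

Section PerfectMatching.

Variable M : {set {set V}}.
Hypothesis pmM : perfect_matching adj M.

Lemma perfect_matching_adj x y : [set x; y] \in M -> adj x y.
Proof.
case/andP: pmM => /forall_inP He _ /He /existsP[a /existsP[b /andP[ab /eqP E]]].
have nab : a != b by apply/eqP=> e; rewrite e adj_irr in ab.
by case: (set2_eq E nab) => [[-> ->]|[-> ->]]; rewrite // adj_sym.
Qed.

Lemma perfect_matching_uniq x y y' :
  [set x; y] \in M -> [set x; y'] \in M -> y = y'.
Proof.
move=> h1 h2.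
have nxy : x != y.
  by apply/eqP=> e; have := perfect_matching_adj h1; rewrite e adj_irr.
case/andP: pmM => _ /forallP /(_ x) /cards1P[e0 E0].
have : [set x; y] \in [set e in M | x \in e] by rewrite !inE h1 eqxx.
have : [set x; y'] \in [set e in M | x \in e] by rewrite !inE h2 eqxx.
rewrite E0 !inE => /eqP <- /eqP E.
have : y \in [set x; y'] by rewrite -E !inE eqxx orbT.
by rewrite !inE eq_sym (negbTE nxy) /= => /eqP.
Qed.

Lemma perfect_matching_cover x : exists y, [set x; y] \in M.
Proof.
case/andP: pmM => /forall_inP He /forallP /(_ x) /cards1P[e0 E0].
have : e0 \in [set e in M | x \in e] by rewrite E0 inE.
rewrite inE => /andP[e0M xe0].
case/existsP: (He _ e0M) => a /existsP[b /andP[_ /eqP E]].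
move: xe0; rewrite E !inE => /orP[/eqP->|/eqP->].
  by exists b; rewrite -E.
by exists a; rewrite setUC -E.
Qed.

Lemma partnerP x : [set x; partner M x] \in M.
Proof.
rewrite ffunE; case: pickP => [y //|H].
by case: (perfect_matching_cover x) => y; rewrite H.
Qed.

Lemma partner_involution : partner M \in matching_involutions.
Proof.
apply/matching_involutionsP=> x; split; last exact: perfect_matching_adj (partnerP x).
apply: (perfect_matching_uniq (partnerP (partner M x))).
by rewrite setUC; apply: partnerP.
Qed.

Lemma matching_of_partner : matching_of (partner M) = M.
Proof.
apply/setP=> e; apply/imsetP/idP => [[x _ ->]|eM]; first exact: partnerP.
case/andP: pmM => /forall_inP He _.
case/existsP: (He _ eM) => a /existsP[b /andP[_ /eqP E]].
exists a => //; rewrite E; congr [set a; _].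
by apply: (perfect_matching_uniq (x := a)); [rewrite -E | apply: partnerP].
Qed.

End PerfectMatching.

Lemma matching_of_perfect (q : {ffun V -> V}) :
  q \in matching_involutions -> perfect_matching adj (matching_of q).
Proof.
move=> /matching_involutionsP H; apply/andP; split.
  apply/forall_inP=> e /imsetP[x _ ->]; apply/existsP; exists x; apply/existsP.
  by exists (q x); rewrite (H x).2 eqxx.
apply/forallP=> y; apply/cards1P; exists [set y; q y]; apply/setP=> e.
rewrite !inE; apply/andP/eqP.
  case=> /imsetP[x _ ->]; rewrite !inE => /orP[/eqP->//|/eqP->].
  by rewrite (H x).1 setUC.
by move=> ->; split; [apply/imsetP; exists y | rewrite !inE eqxx].
Qed.

Lemma perfect_matchingsE : perfect_matchings adj = matching_of @: matching_involutions.
Proof.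
apply/setP=> M; rewrite inE; apply/idP/imsetP => [pmM|[q hq ->]].
  by exists (partner M); rewrite ?partner_involution ?matching_of_partner.
exact: matching_of_perfect.
Qed.

Lemma card_perfect_matchings :
  #|perfect_matchings adj| = #|matching_involutions|.
Proof. by rewrite perfect_matchingsE card_in_imset //; apply: matching_of_inj. Qed.

Definition pairing_involutions (v u : V) : {set {ffun V -> V}} :=
  [set q in matching_involutions | q v == u].

Lemma card_perfect_matchings_pair (u v : V) :
  #|[set M in perfect_matchings adj | [set u; v] \in M]| = #|pairing_involutions v u|.
Proof.
have qC q : q \in matching_involutions -> (q u == v) = (q v == u).
  by move=> /matching_involutionsP H; apply/eqP/eqP=> <-; apply: (H _).1.
have -> : [set M in perfect_matchings adj | [set u; v] \in M] =
          matching_of @: pairing_involutions v u.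
  apply/setP=> M; rewrite inE perfect_matchingsE; apply/andP/imsetP.
    case=> /imsetP[q hq ->]; rewrite mem_matching_of // => e.
    by exists q; rewrite // inE hq -qC.
  case=> q; rewrite inE => /andP[hq e] ->; split; first by apply/imsetP; exists q.
  by rewrite mem_matching_of // qC.
rewrite card_in_imset //; apply: sub_in2 matching_of_inj.
by move=> q; rewrite inE => /andP[].
Qed.

End MatchingInvolutions.

Section Rematch.

Variables (V : finType) (p : V -> V).

Definition rematch (a b c d : V) : {ffun V -> V} :=
  [ffun z => if z == a then b else if z == b then a else if z == c then d
             else if z == d then c else p z].

Lemma rematch_out a b c d z : z \notin [:: a; b; c; d] -> rematch a b c d z = p z.
Proof.
by rewrite ffunE !inE; case: (z =P a); case: (z =P b); case: (z =P c); case: (z =P d).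
Qed.

Lemma rematch_pts a b c d :
  [&& a != b, a != c, a != d, b != c, b != d & c != d] ->
  [/\ rematch a b c d a = b, rematch a b c d b = a,
      rematch a b c d c = d & rematch a b c d d = c].
Proof.
case/and5P=> ab ac ad bc /andP[bd cd].
by rewrite !ffunE !eqxx !(eq_sym b a) !(eq_sym c a) !(eq_sym d a) !(eq_sym c b)
  !(eq_sym d b) !(eq_sym d c) (negbTE ab) (negbTE ac) (negbTE ad) (negbTE bc)
  (negbTE bd) (negbTE cd).
Qed.

Lemma rematch_invol a b c d :
  [&& a != b, a != c, a != d, b != c, b != d & c != d] ->
  (forall z, p (p z) = z) ->
  (forall z, p z \in [:: a; b; c; d] -> z \in [:: a; b; c; d]) ->
  forall z, rematch a b c d (rematch a b c d z) = z.
Proof.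
move=> D pp hp z; have [ra rb rc rd] := rematch_pts D.
case: (boolP (z \in [:: a; b; c; d])) => [|zn].
  by rewrite !inE => /or4P[] /eqP->; rewrite ?ra ?rb ?rc ?rd.
by rewrite (rematch_out zn) rematch_out ?pp //; apply: contra (hp z) zn.
Qed.

End Rematch.

Section GreedyMatching.

Variables (V : finType) (adj : rel V).
Hypotheses (adj_sym : symmetric adj) (adj_irr : irreflexive adj).

Definition partial_matching (p : V -> V) :=
  forall x, p (p x) = x /\ (p x != x -> adj x (p x)).

Definition matched (p : V -> V) : {set V} := [set x | p x != x].

Section Extension.

Variables (p : V -> V) (a b : V).
Hypotheses (pm_p : partial_matching p) (pa : p a = a) (pb : p b = b) (nab : a != b).

Let pp z : p (p z) = z. Proof. exact: (pm_p z).1. Qed.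

Lemma card_matched_add2 : #|a |: (b |: matched p)| = (#|matched p|).+2.
Proof. by rewrite !cardsU1 !inE pa pb !eqxx (negbTE nab). Qed.

Lemma partial_matching_add_edge :
  adj a b ->
  partial_matching (rematch p a b a b) /\
  matched (rematch p a b a b) = a |: (b |: matched p).
Proof.
move=> ab; have hs z : rematch p a b a b z =
    if z == a then b else if z == b then a else p z.
  by rewrite ffunE; case: (z == a); case: (z == b).
have nba : (b == a) = false by rewrite eq_sym (negbTE nab).
split=> [z|]; last first.
  apply/setP=> z; rewrite !inE hs.
  case: (z =P a) => [->|_] /=; first by rewrite eq_sym nab.
  by case: (z =P b) => [->|_] /=; rewrite ?nab.
rewrite !hs; case: (z =P a) => [->|nza]; first by rewrite eqxx ?nba.
case: (z =P b) => [->|nzb]; first by rewrite eqxx ?nba (negbTE nab) adj_sym.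
have -> : (p z == a) = false by apply/eqP=> e; apply: nza; rewrite -(pp z) e pa.
have -> : (p z == b) = false by apply/eqP=> e; apply: nzb; rewrite -(pp z) e pb.
exact: pm_p.
Qed.

(* The augmenting path a - x - p x - b replaces the edge {x, p x}. *)
Lemma partial_matching_augment x :
  p x != x -> adj a x -> adj b (p x) ->
  partial_matching (rematch p a x b (p x)) /\
  matched (rematch p a x b (p x)) = a |: (b |: matched p).
Proof.
move=> nx ax bx.
have nax : a != x by apply: contraNneq nx => e; rewrite -e pa.
have nay : a != p x by apply: contraNneq nx => e; rewrite -{2}(pp x) -e pa.
have nxb : x != b by apply: contraNneq nx => e; rewrite e pb.
have nby : b != p x by apply: contraNneq nx => e; rewrite -{2}(pp x) -e pb.
have D : [&& a != x, a != b, a != p x, x != b, x != p x & b != p x].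
  by rewrite nax nab nay nxb eq_sym nx nby.
have hP z : p z \in [:: a; x; b; p x] -> z \in [:: a; x; b; p x].
  by rewrite !inE => /or4P[] /eqP e; rewrite -(pp z) e ?pa ?pb ?pp eqxx ?orbT.
have [ra rx rb ry] := rematch_pts p D.
split=> [z|].
  split; first exact: rematch_invol.
  case: (boolP (z \in [:: a; x; b; p x])) => [|zn].
    by rewrite !inE => /or4P[] /eqP->; rewrite ?ra ?rx ?rb ?ry // adj_sym.
  by rewrite rematch_out //; apply: (pm_p z).2.
apply/setP=> z; rewrite /matched !inE.
case: (boolP (z \in [:: a; x; b; p x])) => [|zn].
  rewrite !inE => /or4P[] /eqP->.
  - by rewrite ra eqxx /= eq_sym.
  - by rewrite rx nx !orbT.
  - by rewrite rb eqxx orbT eq_sym.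
  - by rewrite ry pp (eq_sym x) nx !orbT.
rewrite rematch_out //.
by move: zn; rewrite !inE => /norP[/negbTE-> /norP[_ /norP[/negbTE-> _]]].
Qed.

End Extension.

Variable K : nat.
Hypothesis card_non_neighbours_le : forall w, #|non_neighbours adj w| <= K.
Hypothesis K_small : 3 * K < #|V|.

(* If no edge joins two unmatched vertices a and b, all unmatched vertices are
   non-neighbours of a; so more than 2K vertices are matched, and one of them,
   x, has x ~ a and p x ~ b. *)
Lemma partial_matching_grow p :
  partial_matching p -> (#|matched p|).+2 <= #|V| ->
  exists p', partial_matching p' /\ #|matched p'| = (#|matched p|).+2.
Proof.
move=> pm_p hk; have pp z : p (p z) = z by apply: (pm_p z).1.
set F := ~: matched p.
have cF : #|F| = #|V| - #|matched p| by have := cardsC (matched p); rewrite -/F; lia.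
have inF z : (z \in F) = (p z == z) by rewrite !inE negbK.
case: (boolP [exists a, exists b, [&& a \in F, b \in F, a != b & adj a b]]).
  case/existsP=> a /existsP[b /and4P[]]; rewrite !inF => /eqP pa /eqP pb nab ab.
  have [pm' E] := partial_matching_add_edge pm_p pa pb nab ab.
  by exists (rematch p a b a b); rewrite E card_matched_add2.
rewrite negb_exists => /forallP noFedge.
have /card_gt0P[a aF] : 0 < #|F| by lia.
have /card_gt0P[b] : 0 < #|F :\ a| by have := cardsD1 a F; rewrite aF; lia.
rewrite !inE => /andP[nba bF].
have cFK : #|F| <= K.
  apply: leq_trans (card_non_neighbours_le a); apply: subset_leq_card.
  apply/subsetP=> z zF; rewrite inE; have [->|nza] := eqVneq z a; first by rewrite adj_irr.
  by have := noFedge a; rewrite negb_exists => /forallP /(_ z); rewrite aF zF eq_sym nza.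
set X := non_neighbours adj a :|: p @^-1: non_neighbours adj b.
have cX : #|X| <= 2 * K.
  apply: leq_trans (leq_card_setU _ _).1 _.
  rewrite card_preimset; last exact: can_inj pp.
  by have := card_non_neighbours_le a; have := card_non_neighbours_le b; lia.
have /card_gt0P[x] : 0 < #|matched p :\: X|.
  by have := cardsID X (matched p); have := subset_leq_card (subsetIr (matched p) X); lia.
rewrite !inE => /andP[/norP[/negPn ax /negPn bx] nx].
rewrite inF in aF; rewrite negbK in bF.
have nab : a != b by rewrite eq_sym.
have [pm' E] := partial_matching_augment pm_p (eqP aF) (eqP bF) nab nx ax bx.
by exists (rematch p a x b (p x)); rewrite E card_matched_add2 //; apply/eqP.
Qed.

Lemma exists_partial_matching k :
  2 * k <= #|V| -> exists p, partial_matching p /\ #|matched p| = 2 * k.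
Proof.
elim: k => [_|k IH hk].
  exists id; split=> [x|]; first by split=> //; rewrite eqxx.
  by apply/eqP; rewrite cards_eq0; apply/eqP/setP=> x; rewrite !inE eqxx.
have [|p [pm_p cp]] := IH; first by lia.
have [|p' [pm' cp']] := partial_matching_grow pm_p; first by lia.
by exists p'; split=> //; lia.
Qed.

Lemma card_matching_involutions_gt0 :
  ~~ odd #|V| -> 0 < #|matching_involutions adj|.
Proof.
move=> ev; have e2 : 2 * #|V|./2 = #|V|.
  by have := odd_double_half #|V|; rewrite (negbTE ev) -mul2n.
have [p [pm_p cp]] := exists_partial_matching (eq_leq e2).
have unfixed z : p z != z.
  have : matched p = setT by apply/eqP; rewrite eqEcard subsetT cardsT cp e2 leqnn.
  by move/setP/(_ z); rewrite !inE.
apply/card_gt0P; exists [ffun z => p z]; apply/matching_involutionsP=> x.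
by rewrite !ffunE; have [-> /(_ (unfixed x))] := pm_p x.
Qed.

End GreedyMatching.

Section Switching.

Variables (V : finType) (adj : rel V).
Hypotheses (adj_sym : symmetric adj) (adj_irr : irreflexive adj).
Variables v u : V.

Definition switchable : {set {ffun V -> V}} :=
  [set q in matching_involutions adj | (q v != u) && adj (q v) (q u)].

Definition blocked : {set {ffun V -> V}} :=
  [set q in matching_involutions adj | ~~ adj (q v) (q u)].

Definition switch (q : {ffun V -> V}) : {ffun V -> V} := rematch q v u (q v) (q u).

Lemma switchableP q :
  q \in switchable ->
  [/\ (forall z, q (q z) = z), (forall z, adj z (q z)),
      [&& v != u, v != q v, v != q u, u != q v, u != q u & q v != q u]
    & adj (q v) (q u)].
Proof.
rewrite inE => /andP[/matching_involutionsP hq /andP[nu aw]].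
have qq z : q (q z) = z by apply: (hq z).1.
have qa z : adj z (q z) by apply: (hq z).2.
have ne z : z != q z by apply/eqP=> e; have := qa z; rewrite -e adj_irr.
split=> //.
have h1 : v != u by apply: contraTneq aw => ->; rewrite adj_irr.
have h2 : v != q u by apply: contraNneq nu => ->; rewrite qq.
have h4 : q v != q u by apply: contraNneq h1 => /(congr1 q); rewrite !qq => ->.
have h3 : u != q v by apply: contraNneq nu => <-.
by rewrite h1 ne h2 h3 ne h4.
Qed.

Lemma switch_pairing q :
  adj v u -> q \in switchable -> switch q \in pairing_involutions adj v u.
Proof.
move=> avu hq; have [qq qa D quv] := switchableP hq.
have hP z : q z \in [:: v; u; q v; q u] -> z \in [:: v; u; q v; q u].
  by rewrite !inE => /or4P[] /eqP e; rewrite -(qq z) e ?qq eqxx ?orbT.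
have [rv ru rw rx] := rematch_pts q D.
rewrite inE /switch rv eqxx andbT; apply/matching_involutionsP=> z.
split; first exact: rematch_invol.
case: (boolP (z \in [:: v; u; q v; q u])) => [|zn]; last first.
  by rewrite rematch_out.
by rewrite !inE => /or4P[] /eqP->; rewrite ?rv ?ru ?rw ?rx // adj_sym.
Qed.

Lemma switchK q :
  q \in switchable -> rematch (switch q) v (q v) u (switch q (q v)) = q.
Proof.
move=> hq; have [qq _ D _] := switchableP hq.
have [rv ru rw rx] := rematch_pts q D.
move: (D) => /and5P[h1 h2 h3 h4 /andP[h5 h6]].
have D' : [&& v != q v, v != u, v != q u, q v != u, q v != q u & u != q u].
  by rewrite h1 h2 h3 h6 h5 eq_sym h4.
have [sv sw su sx] := rematch_pts (switch q) D'.
rewrite /switch rw; apply/ffunP=> z.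
case: (boolP (z \in [:: v; u; q v; q u])) => [|zn].
  by rewrite !inE => /or4P[] /eqP->; rewrite ?sv ?su ?sw ?sx ?qq.
have zn' : z \notin [:: v; q v; u; q u].
  by move: zn; rewrite !inE; case: (z == v); case: (z == u); case: (z == q v).
by rewrite !rematch_out.
Qed.

Lemma card_switchable_le :
  adj v u -> #|switchable| <= #|pairing_involutions adj v u| * #|V|.-1.
Proof.
move=> avu; pose g q := (switch q, q v).
have g_inj : {in switchable &, injective g}.
  by move=> q1 q2 h1 h2 [E1 E2]; rewrite -(switchK h1) -(switchK h2) E1 E2.
rewrite -(card_in_imset g_inj) -(cardsC1 v) -cardsX.
apply: subset_leq_card; apply/subsetP=> y /imsetP[q hq ->].
rewrite in_setX /= switch_pairing //.
by have [_ _ /and5P[_ h _ _ _] _] := switchableP hq; rewrite !inE eq_sym.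
Qed.

Lemma card_matching_involutions_split :
  #|matching_involutions adj| <=
    #|pairing_involutions adj v u| + #|switchable| + #|blocked|.
Proof.
apply: leq_trans (_ : #|pairing_involutions adj v u :|: switchable :|: blocked| <= _).
  apply: subset_leq_card; apply/subsetP=> q hq; rewrite !inE; move: hq; rewrite inE => -> /=.
  by case: (q v == u); case: (adj (q v) (q u)).
apply: leq_trans (leq_card_setU _ _).1 _.
by rewrite leq_add2r; apply: (leq_card_setU _ _).1.
Qed.

End Switching.

Section RarePairs.

Variables (V : finType) (adj : rel V).
Hypotheses (adj_sym : symmetric adj) (adj_irr : irreflexive adj).
Variable K : nat.
Hypothesis card_non_neighbours_le : forall w, #|non_neighbours adj w| <= K.

Let T := #|matching_involutions adj|.

Lemma sum_card_blocked v : \sum_u #|blocked adj v u| <= T * K.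
Proof.
have card_sepE (A : {set {ffun V -> V}}) (P : pred {ffun V -> V}) :
    #|[set x in A | P x]| = \sum_(x in A) P x.
  rewrite -sum1_card [LHS]big_mkcond [RHS]big_mkcond /=; apply: eq_bigr => x _.
  by rewrite !inE; case: (x \in A); case: (P x).
rewrite /blocked; under eq_bigr => u _ do rewrite card_sepE.
rewrite exchange_big /= -sum_nat_const; apply: leq_sum => q hq.
have qq z : q (q z) = z by have /matching_involutionsP/(_ z)[] := hq.
have -> : \sum_u (~~ adj (q v) (q u) : nat) = #|[set u | ~~ adj (q v) (q u)]|.
  by rewrite -sum1dep_card [RHS]big_mkcond /=; apply: eq_bigr => u _; case: (~~ _).
apply: leq_trans (card_non_neighbours_le (q v)).
rewrite -(card_preimset _ (can_inj qq)); apply: subset_leq_card.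
by apply/subsetP=> u; rewrite !inE qq.
Qed.

Lemma card_often_blocked m v :
  0 < T -> #|[set u | T < m * #|blocked adj v u|]| <= m * K.
Proof.
move=> Tpos; set Bb := [set u | _].
suff : #|Bb| * T <= m * (T * K) by rewrite mulnCA mulnC leq_pmul2l.
apply: leq_trans (_ : \sum_(u in Bb) m * #|blocked adj v u| <= _).
  by rewrite -sum_nat_const; apply: leq_sum => u; rewrite inE => /ltnW.
apply: leq_trans (_ : \sum_u m * #|blocked adj v u| <= _).
  by rewrite [leqRHS](bigID (mem Bb)) /= leq_addr.
by rewrite -big_distrr leq_mul2l sum_card_blocked orbT.
Qed.

Lemma card_rarely_paired m v :
  #|[set u | m * #|V| * #|pairing_involutions adj v u| < m.-1 * T]| <= m.+1 * K.
Proof.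
have [T0|Tpos] := posnP T.
  by rewrite (_ : [set u | _] = set0) ?cards0 //; apply/setP=> u; rewrite !inE T0 muln0.
apply: leq_trans (_ : #|non_neighbours adj v :|: [set u | T < m * #|blocked adj v u|]| <= _).
  apply: subset_leq_card; apply/subsetP=> u; rewrite !inE => rare.
  apply/negPn/negP => /norP[/negPn avu]; rewrite -leqNgt => rarely_blocked.
  have := card_matching_involutions_split adj v u.
  have := card_switchable_le adj_sym adj_irr avu.
  have n1 : 0 < #|V| by apply/card_gt0P; exists v.
  by move: rare rarely_blocked; rewrite -/T; case: #|V| n1 => // n _ /=; nia.
apply: leq_trans (leq_card_setU _ _).1 _.
by have := card_non_neighbours_le v; have := card_often_blocked m v Tpos; lia.
Qed.

End RarePairs.

Lemma card_non_neighbours_add_degree (V : finType) (adj : rel V) w :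
  #|non_neighbours adj w| + degree adj w = #|V|.
Proof.
rewrite addnC /degree -(cardsC [set u | adj w u]); congr (_ + _).
by apply: eq_card => y; rewrite !inE.
Qed.

Section Numerics.

Local Open Scope ring_scope.

Lemma card_non_neighbours_le_deficit (R : numFieldType) (V : finType) (adj : rel V)
    w (c : nat) (x : R) :
  (0 < c)%N -> #|V|%:R - x / c%:R <= (degree adj w)%:R ->
  (#|non_neighbours adj w| * c)%:R <= x.
Proof.
move=> c_gt0; rewrite -(card_non_neighbours_add_degree adj w) natrD.
rewrite lerBlDr (addrC (#|non_neighbours adj w|)%:R) lerD2l.
by rewrite natrM ler_pdivlMr ?ltr0n.
Qed.

Lemma pm_prob_ltE (V : finType) (adj : rel V) (u v : V) (a b : nat) :
  symmetric adj -> irreflexive adj ->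
  (0 < #|matching_involutions adj|)%N -> (0 < b)%N ->
  (pm_prob adj u v < a%:R / b%:R) =
    (b * #|pairing_involutions adj v u| < a * #|matching_involutions adj|)%N.
Proof.
move=> sym irr T_gt0 b_gt0.
rewrite /pm_prob card_perfect_matchings_pair // card_perfect_matchings //.
by rewrite ltr_pdivrMr ?ltr0n // mulrAC ltr_pdivlMr ?ltr0n // -!natrM ltr_nat mulnC.
Qed.

Lemma nat_sqr_le_of_sqrtC (k n : nat) : k%:R <= sqrtC n%:R :> algC -> (k ^ 2 <= n)%N.
Proof.
move=> le_k_sqrt; rewrite -(ler_nat algC) natrX -[n%:R]sqrtCK.
by rewrite ler_sqr ?nnegrE ?ler0n ?sqrtC_ge0.
Qed.

End Numerics.

Theorem mainTheorem15 :
  exists N : nat, forall (n : nat) (adj : rel 'I_n),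
    (N <= n)%N -> ~~ odd n -> simple_graph adj ->
    (forall v : 'I_n,
        ((n%:R - sqrtC (n%:R) / 4000%:R)%R <= (degree adj v)%:R :> algC)%R) ->
    forall v : 'I_n,
      ((#|[set u : 'I_n | (pm_prob adj u v < 99%:R / (100 * n)%:R)%R]|)%:R
         <= sqrtC (n%:R) / 9%:R :> algC)%R.
Proof.
(* No size threshold is needed: 4000 K <= sqrt n already forces 3 K < n. *)
exists 0%N => n adj _ ev [sym irr] deg_ge v.
have n_gt0 : (0 < n)%N by apply: leq_ltn_trans (ltn_ord v).
set K := (\max_(w : 'I_n) #|non_neighbours adj w|)%N.
have K_max w : (#|non_neighbours adj w| <= K)%N by apply: leq_bigmax.
have K_sqrt : ((K * 4000)%:R <= sqrtC n%:R :> algC)%R.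
  have [|w Kw] := bigop.eq_bigmax (fun w => #|non_neighbours adj w|); first by rewrite card_ord.
  rewrite /K Kw.
  by apply: card_non_neighbours_le_deficit; rewrite // card_ord.
have K_small : (3 * K < #|'I_n|)%N.
  by have := nat_sqr_le_of_sqrtC K_sqrt; rewrite (card_ord n); nia.
have ev' : ~~ odd #|'I_n| by rewrite card_ord.
have T_gt0 := card_matching_involutions_gt0 sym irr K_max K_small ev'.
apply: (@le_trans _ _ ((101 * K)%:R)%R).
  rewrite ler_nat; apply: leq_trans (card_rarely_paired sym irr K_max 100 v).
  apply: subset_leq_card; apply/subsetP=> u.
  by rewrite !inE pm_prob_ltE ?muln_gt0 // (card_ord n).
rewrite ler_pdivlMr ?ltr0n // -natrM; apply: le_trans K_sqrt.
by rewrite ler_nat; lia.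
Qed.
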